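(* Let $0<|q|<1$ and let $x,y,u,v,t$ be complex numbers with $|t|<1$, $|xt|<1$, $|ut|<1$, $|uxt|<1$. Then $$\sum_{n=0}^\infty h_n(x,y|q)\,h_n(u,v|q)\,\frac{t^n}{(q;q)_n}=\frac{(yt,vxt;q)_\infty}{(t,xt,uxt;q)_\infty}\ {}_3\phi_2\left(\begin{array}{c} y,\ xt,\ v/u\\ yt,\ vxt\end{array}; q,\ ut\right).$$
   Context: Throughout $|q|<1$. The $q$-shifted factorials are $(a;q)_0=1$, $(a;q)_n=\prod_{k=0}^{n-1}(1-aq^k)$, $(a;q)_\infty=\prod_{k=0}^\infty(1-aq^k)$, and $(a_1,\dots,a_m;q)_n=(a_1;q)_n\cdots(a_m;q)_n$ (similarly for $n=\infty$). The Gaussian coefficient is ${n\brack k}=\frac{(q;q)_n}{(q;q)_k(q;q)_{n-k}}$. The basic hypergeometric series is ${}_{r+1}\phi_r\left(\begin{array}{c}a_1,\dots,a_{r+1}\\ b_1,\dots,b_r\end{array};q,z\right)=\sum_{n\ge0}\frac{(a_1,\dots,a_{r+1};q)_n}{(q,b_1,\dots,b_r;q)_n}z^n$. The Cauchy polynomials are $P_n(x,y)=(x-y)(x-qy)\cdots(x-q^{n-1}y)$ (with $P_0=1$), and the bivariate Rogers–Szegő polynomials are $h_n(x,y|q)=\sum_{k=0}^n {n\brack k}P_k(x,y)$. *)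

From Stdlib Require Import Reals.
From Coquelicot Require Import Coquelicot.
Open Scope C_scope.

Fixpoint csum (n : nat) (f : nat -> C) : C :=
  match n with O => RtoC 0 | S m => csum m f + f m end.
Fixpoint cprod (n : nat) (f : nat -> C) : C :=
  match n with O => RtoC 1 | S m => cprod m f * f m end.

Definition qpoch (a q : C) (n : nat) : C :=
  cprod n (fun k => RtoC 1 - a * Cpow q k).

Definition is_qpoch_inf (a q P : C) : Prop :=
  filterlim (fun n => qpoch a q n) eventually (locally P).

Definition qbinom (q : C) (n k : nat) : C :=
  qpoch q q n / (qpoch q q k * qpoch q q (n - k)).

Definition cauchyP (q x y : C) (n : nat) : C :=
  cprod n (fun j => x - Cpow q j * y).

Definition hRS (q x y : C) (n : nat) : C :=
  csum (S n) (fun k => qbinom q n k * cauchyP q x y k).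

Definition phi32_term (a1 a2 a3 b1 b2 q z : C) (n : nat) : C :=
  qpoch a1 q n * qpoch a2 q n * qpoch a3 q n
  / (qpoch q q n * qpoch b1 q n * qpoch b2 q n) * Cpow z n.

From Stdlib Require Import Reals Lra Lia ClassicalEpsilon.
From Coquelicot Require Import Coquelicot.
Open Scope C_scope.

(* Expanding [h_n(u,v) = sum_b [n b] P_b(u,v)] and exchanging the order of summation
   turns the left-hand side into [sum_b P_b(u,v) t^b sum_M h_(M+b)(x,y) t^M / (q;q)_M].
   For [b = 0] the inner series is the generating function
   [sum_n h_n(x,y) t^n / (q;q)_n = (yt;q)_oo / ((t;q)_oo (xt;q)_oo)], a Cauchy product of two
   instances of the q-binomial theorem [sum_k P_k(x,y) z^k / (q;q)_k = (yz;q)_oo / (xz;q)_oo];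
   for larger [b] it follows by induction from the q-difference in [t].  The result is a finite
   sum over [n <= b] of Pochhammer ratios; splitting [P_b(u,v) = P_n(u,v) P_(b-n)(u, v q^n)] and
   summing over [b - n] by the q-binomial theorem once more leaves the 3phi2 series.  Every
   exchange of summations concerns a double series dominated by [B r^i s^j], which may be summed
   by rows or by diagonals. *)

(** * Finite sums and products *)

Fixpoint rsum (n : nat) (f : nat -> R) : R :=
  match n with O => 0%R | S m => (rsum m f + f m)%R end.

Lemma csum_ext n (f g : nat -> C) :
  (forall k, (k < n)%nat -> f k = g k) -> csum n f = csum n g.
Proof.
  induction n as [|n IH]; intros H; simpl; [reflexivity|].
  rewrite IH by (intros; apply H; lia). now rewrite H by lia.
Qed.

Lemma csum_plus n (f g : nat -> C) : csum n (fun k => f k + g k) = csum n f + csum n g.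
Proof. induction n as [|n IH]; simpl; [ring|]. rewrite IH. ring. Qed.

Lemma csum_minus n (f g : nat -> C) : csum n (fun k => f k - g k) = csum n f - csum n g.
Proof. induction n as [|n IH]; simpl; [ring|]. rewrite IH. ring. Qed.

Lemma csum_scal n c (f : nat -> C) : csum n (fun k => c * f k) = c * csum n f.
Proof. induction n as [|n IH]; simpl; [ring|]. rewrite IH. ring. Qed.

Lemma csum_add n m (f : nat -> C) : csum (n + m) f = csum n f + csum m (fun k => f (n + k)%nat).
Proof.
  induction m as [|m IH]; simpl; [rewrite Nat.add_0_r; ring|].
  rewrite Nat.add_succ_r. simpl. rewrite IH. ring.
Qed.

Lemma csum_Sl n (f : nat -> C) : csum (S n) f = f O + csum n (fun k => f (S k)).
Proof. rewrite <- Nat.add_1_l, csum_add. simpl. ring. Qed.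

Lemma csum_diagonals (a : nat -> nat -> C) N :
  csum N (fun n => csum (S n) (fun i => a i (n - i)%nat)) =
  csum N (fun i => csum (N - i) (a i)).
Proof.
  induction N as [|N IH]; [reflexivity|].
  transitivity (csum N (fun i => csum (N - i) (a i)) + csum (S N) (fun i => a i (N - i)%nat));
    [now rewrite <- IH|].
  rewrite (csum_ext (S N) (fun i => csum (S N - i) (a i))
             (fun i => csum (N - i) (a i) + a i (N - i)%nat)).
  - rewrite csum_plus. simpl. rewrite Nat.sub_diag. simpl. ring.
  - intros i Hi. now replace (S N - i)%nat with (S (N - i)) by lia.
Qed.

Lemma pow_le_one x n : (0 <= x <= 1)%R -> (x ^ n <= 1)%R.
Proof. intros Hx. rewrite <- (pow1 n). apply pow_incr. lra. Qed.

Lemma pow_le_pow_of_le_one x m n : (0 <= x <= 1)%R -> (m <= n)%nat -> (x ^ n <= x ^ m)%R.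
Proof.
  intros Hx Hmn. replace n with (m + (n - m))%nat by lia. rewrite pow_add.
  pose proof (pow_le x m). pose proof (pow_le x (n - m)). pose proof (pow_le_one x (n - m) Hx).
  nra.
Qed.

Lemma exp_le_compat x y : (x <= y)%R -> (exp x <= exp y)%R.
Proof. intros [H|H]; [left; now apply exp_increasing|subst; lra]. Qed.

Lemma rsum_le n (f g : nat -> R) :
  (forall k, (k < n)%nat -> f k <= g k)%R -> (rsum n f <= rsum n g)%R.
Proof.
  induction n as [|n IH]; intros H; simpl; [lra|].
  apply Rplus_le_compat; [apply IH; intros; apply H|apply H]; lia.
Qed.

Lemma rsum_scal n c (f : nat -> R) : rsum n (fun k => c * f k)%R = (c * rsum n f)%R.
Proof. induction n as [|n IH]; simpl; [ring|]. rewrite IH. ring. Qed.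

Lemma rsum_geom_le n r : (0 <= r < 1)%R -> (rsum n (pow r) <= / (1 - r))%R.
Proof.
  intros Hr. assert (E : rsum n (pow r) = ((1 - r ^ n) / (1 - r))%R).
  { induction n as [|n IH]; simpl; [field|rewrite IH; field]; lra. }
  rewrite E, <- (Rmult_1_l (/ (1 - r))). unfold Rdiv. apply Rmult_le_compat_r.
  - apply Rlt_le, Rinv_0_lt_compat. lra.
  - pose proof (pow_le r n). lra.
Qed.

Lemma rsum_nonneg n (f : nat -> R) : (forall k, 0 <= f k)%R -> (0 <= rsum n f)%R.
Proof. intros H. induction n as [|n IH]; simpl; [lra|]. specialize (H n). lra. Qed.

Lemma Cmod_csum_le n (f : nat -> C) : (Cmod (csum n f) <= rsum n (fun k => Cmod (f k)))%R.
Proof.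
  induction n as [|n IH]; simpl.
  - rewrite Cmod_0. lra.
  - eapply Rle_trans; [apply Cmod_triangle|lra].
Qed.

Lemma Cmod_csum_geom_le n (f : nat -> C) B r :
  (0 <= r < 1)%R -> (0 <= B)%R -> (forall k, Cmod (f k) <= B * r ^ k)%R ->
  (Cmod (csum n f) <= B / (1 - r))%R.
Proof.
  intros Hr HB Hf. eapply Rle_trans; [apply Cmod_csum_le|].
  eapply Rle_trans; [apply (rsum_le n _ (fun k => B * r ^ k)%R); auto|].
  rewrite rsum_scal. apply Rmult_le_compat_l; auto. now apply rsum_geom_le.
Qed.

Lemma cprod_add n m (f : nat -> C) : cprod (n + m) f = cprod n f * cprod m (fun k => f (n + k)%nat).
Proof.
  induction m as [|m IH]; simpl; [rewrite Nat.add_0_r; ring|].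
  rewrite Nat.add_succ_r. simpl. rewrite IH. ring.
Qed.

Lemma cprod_ext n (f g : nat -> C) :
  (forall k, (k < n)%nat -> f k = g k) -> cprod n f = cprod n g.
Proof.
  induction n as [|n IH]; intros H; simpl; [reflexivity|].
  rewrite IH by (intros; apply H; lia). now rewrite H by lia.
Qed.

Lemma cprod_neq0 n (f : nat -> C) : (forall k, f k <> 0) -> cprod n f <> 0.
Proof. intros H. induction n; simpl; [apply C1_nz|now apply Cmult_neq_0]. Qed.

(** * Limits and series of complex sequences *)

(* A numeral limit must be written [RtoC 1]: a bare [1] would be elaborated in [R]. *)
Notation "u --> L" := (filterlim u eventually (locally L)) (at level 70).

Lemma limC_eps (u : nat -> C) L :
  u --> L <->
  forall eps : R, (0 < eps)%R -> exists N, forall n, (N <= n)%nat -> (Cmod (u n - L) < eps)%R.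
Proof.
  rewrite (filterlim_locally_ball_norm (K := C_AbsRing)). split.
  - intros H eps Heps. exact (H (mkposreal eps Heps)).
  - intros H eps. exact (H eps (cond_pos eps)).
Qed.

Lemma limC_unique (u : nat -> C) L M : u --> L -> u --> M -> L = M.
Proof. apply (filterlim_locally_unique (K := C_AbsRing) (V := C_NormedModule)). Qed.

Lemma limC_const (c : C) : (fun _ : nat => c) --> c.
Proof. apply filterlim_const. Qed.

Lemma limC_ext (u v : nat -> C) L : (forall n, u n = v n) -> u --> L -> v --> L.
Proof. apply filterlim_ext. Qed.

Lemma limC_plus (u v : nat -> C) L M : u --> L -> v --> M -> (fun n => u n + v n) --> L + M.
Proof.
  intros Hu Hv.
  exact (filterlim_comp_2 u v Cplus Hu Hv
           (filterlim_plus (K := C_AbsRing) (V := C_NormedModule) L M)).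
Qed.

Lemma limC_mult (u v : nat -> C) L M : u --> L -> v --> M -> (fun n => u n * v n) --> L * M.
Proof.
  (* [filterlim_mult] is stated for the absolute-value uniform structure of [C_AbsRing];
     [locally_C] identifies its neighbourhoods with those of [C]. *)
  assert (toAbs : forall (w : nat -> C) K, w --> K ->
            filterlim w eventually (locally (T := AbsRing_UniformSpace C_AbsRing) K)).
  { intros w K Hw P HP. apply Hw. now apply locally_C. }
  intros Hu Hv P HP. apply locally_C in HP.
  exact (filterlim_comp_2 u v Cmult (toAbs _ _ Hu) (toAbs _ _ Hv) (filterlim_mult L M) P HP).
Qed.

Lemma limC_scal c (u : nat -> C) L : u --> L -> (fun n => c * u n) --> c * L.
Proof. apply limC_mult, limC_const. Qed.

Lemma limC_shift_iff (u : nat -> C) k L : (fun n => u (k + n)%nat) --> L <-> u --> L.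
Proof.
  rewrite !limC_eps. split; intros H eps Heps; destruct (H eps Heps) as [N HN].
  - exists (k + N)%nat. intros n Hn. replace n with (k + (n - k))%nat by lia. apply HN. lia.
  - exists N. intros n Hn. apply HN. lia.
Qed.

Lemma Cminus_0_r (z : C) : z - 0 = z.
Proof. ring. Qed.

Lemma Cmod_sub_comm (a b : C) : Cmod (a - b) = Cmod (b - a).
Proof. rewrite <- Cmod_opp. f_equal. ring. Qed.

Lemma limC_Cmod (u : nat -> C) L : u --> L -> is_lim_seq (fun n => Cmod (u n)) (Cmod L).
Proof.
  intros H. exact (filterlim_comp _ _ _ u Cmod _ _ _ H
                     (filterlim_norm (K := C_AbsRing) (V := C_NormedModule) L)).
Qed.

Lemma limC_Cmod_le (u : nat -> C) L c N :
  u --> L -> (forall n, (N <= n)%nat -> Cmod (u n) <= c)%R -> (Cmod L <= c)%R.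
Proof.
  intros H Hc.
  apply (is_lim_seq_le_loc (fun n => Cmod (u n)) (fun _ => c) (Cmod L) c);
    [exists N; exact Hc|now apply limC_Cmod|apply is_lim_seq_const].
Qed.

Lemma limC_Cmod_ge (u : nat -> C) L c :
  u --> L -> (forall n, c <= Cmod (u n))%R -> (c <= Cmod L)%R.
Proof.
  intros H Hc.
  apply (is_lim_seq_le (fun _ => c) (fun n => Cmod (u n)) c (Cmod L));
    [exact Hc|apply is_lim_seq_const|now apply limC_Cmod].
Qed.

Lemma limC_dist_le (u : nat -> C) L v c N :
  u --> L -> (forall n, (N <= n)%nat -> Cmod (u n - v) <= c)%R -> (Cmod (L - v) <= c)%R.
Proof. intros H. apply limC_Cmod_le. apply limC_plus; [exact H|apply limC_const]. Qed.

Lemma limC_of_dist_le (u : nat -> C) L (b : nat -> R) :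
  (forall n, Cmod (u n - L) <= b n)%R -> is_lim_seq b 0%R -> u --> L.
Proof.
  intros Hb Hlim. apply limC_eps. intros eps Heps.
  apply is_lim_seq_spec in Hlim. destruct (Hlim (mkposreal eps Heps)) as [N HN].
  exists N. intros n Hn. specialize (HN n Hn). simpl in HN. rewrite Rminus_0_r in HN.
  eapply Rle_lt_trans; [apply Hb|]. eapply Rle_lt_trans; [apply Rle_abs|exact HN].
Qed.

Lemma sum_n_csum (a : nat -> C) n : sum_n a n = csum (S n) a.
Proof.
  induction n as [|n IH].
  - rewrite sum_O. simpl. change (a O = 0 + a O). ring.
  - rewrite sum_Sn, IH. reflexivity.
Qed.

Lemma is_series_csum (a : nat -> C) l : is_series a l <-> (fun n => csum n a) --> l.
Proof.
  rewrite <- (limC_shift_iff _ 1). unfold is_series.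
  split; apply filterlim_ext; intros n; now rewrite sum_n_csum.
Qed.

(* An unspecified complex number when [u] diverges. *)
Definition LimC (u : nat -> C) : C := epsilon (inhabits (RtoC 0)) (fun L => u --> L).

Lemma LimC_correct (u : nat -> C) L : u --> L -> u --> LimC u.
Proof. intros H. unfold LimC. apply epsilon_spec. now exists L. Qed.

Definition SeriesC (a : nat -> C) : C := LimC (sum_n a).

Lemma SeriesC_correct (a : nat -> C) : ex_series a -> is_series a (SeriesC a).
Proof. intros [l Hl]. exact (LimC_correct _ _ Hl). Qed.

Lemma is_seriesC_unique (a : nat -> C) A B : is_series a A -> is_series a B -> A = B.
Proof. apply (filterlim_locally_unique (K := C_AbsRing) (V := C_NormedModule)). Qed.

Lemma is_seriesC_ext (a b : nat -> C) l : (forall n, a n = b n) -> is_series a l -> is_series b l.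
Proof. apply is_series_ext. Qed.

Lemma is_seriesC_minus (a b : nat -> C) A B :
  is_series a A -> is_series b B -> is_series (fun n => a n - b n) (A - B).
Proof. exact (is_series_minus (K := C_AbsRing) a b A B). Qed.

Lemma is_seriesC_scal c (a : nat -> C) A : is_series a A -> is_series (fun n => c * a n) (c * A).
Proof. exact (is_series_scal (K := C_AbsRing) c a A). Qed.

Lemma is_seriesC_tail (a : nat -> C) A : is_series a A -> is_series (fun n => a (S n)) (A - a O).
Proof.
  intros H. apply (is_series_incr_1 (K := C_AbsRing)).
  assert (E : A - a O + a O = A) by ring.
  change (is_series a (A - a O + a O)). now rewrite E.
Qed.

Lemma ex_seriesC_geom (a : nat -> C) B r :
  (0 <= r < 1)%R -> (forall k, Cmod (a k) <= B * r ^ k)%R -> ex_series a.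
Proof.
  intros Hr Ha. apply (ex_series_le (K := C_AbsRing) (V := C_CompleteNormedModule) _ _ Ha).
  apply (ex_series_scal_l (V := R_NormedModule)), ex_series_geom. rewrite Rabs_pos_eq; lra.
Qed.

Lemma is_seriesC_geom_tail_le (a : nat -> C) A B r m :
  (0 <= r < 1)%R -> (0 <= B)%R -> (forall k, Cmod (a k) <= B * r ^ k)%R -> is_series a A ->
  (Cmod (csum m a - A) <= B * r ^ m / (1 - r))%R.
Proof.
  intros Hr HB Ha HA. apply is_series_csum in HA. rewrite Cmod_sub_comm.
  apply (limC_dist_le _ _ _ _ m HA). intros n Hn.
  replace n with (m + (n - m))%nat by lia. rewrite csum_add.
  replace (csum m a + csum (n - m) (fun k => a (m + k)%nat) - csum m a)
    with (csum (n - m) (fun k => a (m + k)%nat)) by ring.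
  apply Cmod_csum_geom_le; auto.
  - apply Rmult_le_pos; auto. apply pow_le. lra.
  - intros k. rewrite Rmult_assoc, <- pow_add. apply Ha.
Qed.

(** * Double series *)

Lemma pow_mix_le r s tau i N :
  (0 <= r <= tau * tau)%R -> (0 <= s <= tau * tau)%R -> (0 <= tau <= 1)%R -> (i <= N)%nat ->
  (r ^ i * s ^ (N - i) <= tau ^ N * tau ^ i)%R.
Proof.
  intros Hr Hs Ht Hi. apply Rle_trans with ((tau * tau) ^ i * (tau * tau) ^ (N - i))%R.
  - apply Rmult_le_compat; try apply pow_le; try lra; apply pow_incr; lra.
  - rewrite <- pow_add, Rpow_mult_distr. replace (i + (N - i))%nat with N by lia.
    apply Rmult_le_compat_l; [apply pow_le; lra|apply pow_le_pow_of_le_one; [lra|exact Hi]].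
Qed.

Lemma ex_common_sqrt_bound r s :
  (0 <= r < 1)%R -> (0 <= s < 1)%R ->
  exists tau, (0 <= tau < 1)%R /\ (r <= tau * tau)%R /\ (s <= tau * tau)%R.
Proof.
  intros Hr Hs. exists ((1 + Rmax r s) / 2)%R.
  pose proof (Rmax_l r s). pose proof (Rmax_r r s).
  assert (Rmax r s < 1)%R by (apply Rmax_lub_lt; lra).
  pose proof (Rle_0_sqr (1 - Rmax r s)). unfold Rsqr in *. repeat split; nra.
Qed.

Lemma csum_truncated_rows_le (a : nat -> nat -> C) (row : nat -> C) B r s tau N :
  (0 <= B)%R -> (0 <= r <= tau * tau)%R -> (0 <= s <= tau * tau)%R -> (0 <= tau < 1)%R ->
  (forall i m, Cmod (csum m (a i) - row i) <= B * r ^ i * s ^ m)%R ->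
  (Cmod (csum N (fun i => csum (N - i) (a i)) - csum N row) <= B / (1 - tau) * tau ^ N)%R.
Proof.
  intros HB Hr Hs Htau Htail. rewrite <- csum_minus. eapply Rle_trans; [apply Cmod_csum_le|].
  apply Rle_trans with (rsum N (fun i => B * tau ^ N * tau ^ i)%R).
  - apply rsum_le. intros i Hi. eapply Rle_trans; [apply Htail|].
    rewrite !Rmult_assoc. apply Rmult_le_compat_l; [exact HB|].
    apply pow_mix_le; lra || lia.
  - rewrite rsum_scal. apply Rle_trans with (B * tau ^ N * / (1 - tau))%R.
    + apply Rmult_le_compat_l; [apply Rmult_le_pos; [lra|apply pow_le; lra]|].
      apply rsum_geom_le. lra.
    + right. field. lra.
Qed.

(* Rows and diagonals differ by the row tails beyond [N - i], [i < N], which sum to [O(tau^N)]. *)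
Lemma is_series_diagonals (a : nat -> nat -> C) (row : nat -> C) B r s :
  (0 <= B)%R -> (0 <= r < 1)%R -> (0 <= s < 1)%R ->
  (forall i j, Cmod (a i j) <= B * r ^ i * s ^ j)%R ->
  (forall i, is_series (a i) (row i)) ->
  exists l : C, is_series row l /\ is_series (fun n => csum (S n) (fun i => a i (n - i)%nat)) l.
Proof.
  intros HB Hr Hs Ha Hrow. set (B' := (B / (1 - s))%R).
  assert (HB' : (0 <= B')%R) by (unfold B'; apply Rdiv_le_0_compat; lra).
  assert (Htail : forall i m, (Cmod (csum m (a i) - row i) <= B' * r ^ i * s ^ m)%R).
  { intros i m. eapply Rle_trans.
    - apply (is_seriesC_geom_tail_le (a i) _ (B * r ^ i) s); auto.
      apply Rmult_le_pos; [lra|apply pow_le; lra].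
    - right. unfold B'. field. lra. }
  assert (Hrow_le : forall i, (Cmod (row i) <= B' * r ^ i)%R).
  { intros i. specialize (Htail i O). simpl in Htail.
    now rewrite Cmod_sub_comm, Cminus_0_r, Rmult_1_r in Htail. }
  destruct (ex_seriesC_geom row _ r Hr Hrow_le) as [l Hl].
  exists l. split; [exact Hl|].
  destruct (ex_common_sqrt_bound r s Hr Hs) as [tau [Htau [Hrtau Hstau]]].
  apply is_series_csum. apply is_series_csum in Hl.
  apply (limC_ext (fun N => csum N row + (csum N (fun i => csum (N - i) (a i)) - csum N row))).
  { intros N. rewrite csum_diagonals. ring. }
  replace l with (l + 0) by ring. apply limC_plus; [exact Hl|].
  apply (limC_of_dist_le _ _ (fun N => B' / (1 - tau) * tau ^ N)%R).
  - intros N. rewrite Cminus_0_r. apply (csum_truncated_rows_le _ _ _ r s); lra || exact Htail.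
  - replace 0%R with (B' / (1 - tau) * 0)%R by ring.
    apply (is_lim_seq_scal_l _ _ 0%R), is_lim_seq_geom. rewrite Rabs_pos_eq; lra.
Qed.

(** * q-Pochhammer symbols *)

Lemma csum_telescope (u : nat -> C) n : csum n (fun k => u (S k) - u k) = u n - u O.
Proof. induction n as [|n IH]; simpl; [ring|]. rewrite IH. ring. Qed.

Lemma Cmod_cprod_le_exp (f : nat -> C) rho c r k :
  (0 < rho)%R -> (0 <= c)%R -> (0 <= r < 1)%R ->
  (forall j, Cmod (f j) <= rho + c * r ^ j)%R ->
  (Cmod (cprod k f) <= rho ^ k * exp (c / (rho * (1 - r))))%R.
Proof.
  intros Hrho Hc Hr Hf.
  assert (Hsum : forall n, (Cmod (cprod n f) <= rho ^ n * exp (c / rho * rsum n (pow r)))%R).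
  { intros n. induction n as [|n IH]; simpl.
    - rewrite Cmod_1, Rmult_0_r, exp_0. lra.
    - rewrite Cmod_mult, Rmult_plus_distr_l, exp_plus.
      assert (Hfn : (Cmod (f n) <= rho * exp (c / rho * r ^ n))%R).
      { eapply Rle_trans; [apply Hf|].
        pose proof (exp_ineq1_le (c / rho * r ^ n)).
        replace (rho + c * r ^ n)%R with (rho * (1 + c / rho * r ^ n))%R by (field; lra).
        apply Rmult_le_compat_l; lra. }
      replace (rho * rho ^ n * (exp (c / rho * rsum n (pow r)) * exp (c / rho * r ^ n)))%R
        with ((rho ^ n * exp (c / rho * rsum n (pow r))) * (rho * exp (c / rho * r ^ n)))%R by ring.
      apply Rmult_le_compat; auto using Cmod_ge_0. }
  eapply Rle_trans; [apply Hsum|]. apply Rmult_le_compat_l; [apply pow_le; lra|].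
  apply exp_le_compat. replace (c / (rho * (1 - r)))%R with (c / rho * / (1 - r))%R by (field; lra).
  apply Rmult_le_compat_l; [apply Rdiv_le_0_compat; lra|now apply rsum_geom_le].
Qed.

Lemma qpoch_S a q n : qpoch a q (S n) = qpoch a q n * (1 - a * q ^ n).
Proof. reflexivity. Qed.

Lemma qpoch_add a q n m : qpoch a q (n + m) = qpoch a q n * qpoch (a * q ^ n) q m.
Proof.
  unfold qpoch. rewrite cprod_add. f_equal. apply cprod_ext. intros k _.
  rewrite Cpow_add_r. ring.
Qed.

Lemma qpoch_succ_l a q n : qpoch a q (S n) = (1 - a) * qpoch (a * q) q n.
Proof.
  rewrite <- Nat.add_1_l, qpoch_add. unfold qpoch at 1. simpl. f_equal; [ring|]. f_equal. ring.
Qed.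

Lemma qpoch_0_l q n : qpoch 0 q n = 1.
Proof. induction n as [|n IH]; [reflexivity|]. rewrite qpoch_S, IH. ring. Qed.

Lemma Cminus_1_neq0 (z : C) : z <> 1 -> 1 - z <> 0.
Proof. intros Hz E. apply Hz. apply Ceq_minus in E. rewrite <- E. ring. Qed.

Lemma qpoch_neq0 a q n : (forall k, a * q ^ k <> 1) -> qpoch a q n <> 0.
Proof. intros H. apply cprod_neq0. intros k. now apply Cminus_1_neq0. Qed.

Lemma Cmod_lt_1_neq1 (a : C) : (Cmod a < 1)%R -> a <> 1.
Proof. intros Ha E. rewrite E, Cmod_1 in Ha. lra. Qed.

Lemma Cmult_pow_neq1 a q k : (Cmod a < 1)%R -> (Cmod q <= 1)%R -> a * q ^ k <> 1.
Proof.
  intros Ha Hq. apply Cmod_lt_1_neq1. rewrite Cmod_mult, Cmod_pow.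
  pose proof (pow_le_one (Cmod q) k ltac:(split; [apply Cmod_ge_0|exact Hq])).
  pose proof (Cmod_ge_0 a). pose proof (pow_le (Cmod q) k (Cmod_ge_0 q)). nra.
Qed.

Lemma Cmod_qpoch_le a q A n :
  (Cmod q < 1)%R -> (Cmod a <= A)%R -> (Cmod (qpoch a q n) <= exp (A / (1 - Cmod q)))%R.
Proof.
  intros Hq Ha. eapply Rle_trans.
  - apply (Cmod_cprod_le_exp _ 1 A (Cmod q)); [lra|eapply Rle_trans; [apply Cmod_ge_0|exact Ha]| |].
    + split; [apply Cmod_ge_0|exact Hq].
    + intros j. eapply Rle_trans; [apply Cmod_triangle|]. rewrite Cmod_1, Cmod_opp, Cmod_mult, Cmod_pow.
      apply Rplus_le_compat_l, Rmult_le_compat_r; [apply pow_le, Cmod_ge_0|exact Ha].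
  - rewrite pow1, Rmult_1_l, Rmult_1_l. lra.
Qed.

Lemma Cmod_qpoch_ge a q n : (1 - Cmod a * rsum n (pow (Cmod q)) <= Cmod (qpoch a q n))%R.
Proof.
  induction n as [|n IH]; simpl.
  - unfold qpoch. simpl. rewrite Cmod_1. lra.
  - rewrite qpoch_S, Cmod_mult.
    assert (Hf : (1 - Cmod a * Cmod q ^ n <= Cmod (1 - a * q ^ n))%R).
    { pose proof (Cmod_triangle (1 - a * q ^ n) (a * q ^ n)) as T.
      replace (1 - a * q ^ n + a * q ^ n) with (RtoC 1) in T by ring.
      rewrite Cmod_1, Cmod_mult, Cmod_pow in T. lra. }
    pose proof (Cmod_ge_0 (qpoch a q n)). pose proof (Cmod_ge_0 (1 - a * q ^ n)).
    assert (0 <= Cmod a * Cmod q ^ n)%R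
      by (apply Rmult_le_pos; [apply Cmod_ge_0|apply pow_le, Cmod_ge_0]).
    assert (0 <= Cmod a * rsum n (pow (Cmod q)))%R
      by (apply Rmult_le_pos; [apply Cmod_ge_0|apply rsum_nonneg; intros; apply pow_le, Cmod_ge_0]).
    rewrite Rmult_plus_distr_l.
    destruct (Rle_or_lt (1 - Cmod a * rsum n (pow (Cmod q)) - Cmod a * Cmod q ^ n) 0); nra.
Qed.

Lemma Cmod_qpoch_ge_half a q n :
  (Cmod q < 1)%R -> (Cmod a <= (1 - Cmod q) / 2)%R -> (1 / 2 <= Cmod (qpoch a q n))%R.
Proof.
  intros Hq Ha. eapply Rle_trans; [|apply Cmod_qpoch_ge].
  pose proof (rsum_geom_le n (Cmod q) ltac:(split; [apply Cmod_ge_0|exact Hq])).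
  pose proof (rsum_nonneg n (pow (Cmod q)) (fun k => pow_le _ k (Cmod_ge_0 q))).
  assert (Cmod a * rsum n (pow (Cmod q)) <= (1 - Cmod q) / 2 * / (1 - Cmod q))%R
    by (apply Rmult_le_compat; auto using Cmod_ge_0).
  replace ((1 - Cmod q) / 2 * / (1 - Cmod q))%R with (1 / 2)%R in * by (field; lra). lra.
Qed.

Lemma ex_mult_pow_le a r eps :
  (0 <= a)%R -> (0 <= r < 1)%R -> (0 < eps)%R -> exists K, (a * r ^ K <= eps)%R.
Proof.
  intros Ha Hr Heps.
  destruct (pow_lt_1_zero r ltac:(rewrite Rabs_pos_eq; lra) (eps / (a + 1))%R) as [K HK];
    [apply Rdiv_lt_0_compat; lra|].
  exists K. specialize (HK K (le_n K)). rewrite Rabs_pos_eq in HK by (apply pow_le; lra).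
  apply (Rmult_lt_compat_l (a + 1)) in HK; [|lra].
  replace ((a + 1) * (eps / (a + 1)))%R with eps in HK by (field; lra).
  pose proof (pow_le r K ltac:(lra)). nra.
Qed.

Lemma qpoch_lower_bound a q :
  (Cmod q < 1)%R -> (forall k, a * q ^ k <> 1) ->
  exists d, (0 < d)%R /\ forall n, (d <= Cmod (qpoch a q n))%R.
Proof.
  intros Hq Ha. pose proof (Cmod_ge_0 q) as Hq0. pose proof (Cmod_ge_0 a) as Ha0.
  assert (Hshift : forall n, (Cmod (a * q ^ n) = Cmod a * Cmod q ^ n)%R).
  { intros n. now rewrite Cmod_mult, Cmod_pow. }
  destruct (ex_mult_pow_le (Cmod a) (Cmod q) ((1 - Cmod q) / 2) Ha0 ltac:(lra) ltac:(lra)) as [K HK].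
  rewrite <- Hshift in HK.
  set (E := exp (Cmod a / (1 - Cmod q))).
  assert (HE : (1 <= E)%R).
  { pose proof (exp_ineq1_le (Cmod a / (1 - Cmod q))).
    assert (0 <= Cmod a / (1 - Cmod q))%R by (apply Rdiv_le_0_compat; lra). unfold E. lra. }
  set (PK := Cmod (qpoch a q K)).
  assert (HPK : (0 < PK)%R) by (apply Cmod_gt_0, qpoch_neq0, Ha).
  exists (PK / (2 * E))%R. split; [apply Rdiv_lt_0_compat; lra|]. intros n.
  apply Rle_trans with (Rmin (PK / E) (PK / 2)).
  { apply Rmin_glb; unfold Rdiv; apply Rmult_le_compat_l; try lra;
      apply Rinv_le_contravar; lra. }
  destruct (Nat.le_ge_cases n K) as [HnK|HnK].
  - (* [(a;q)_K = (a;q)_n (a q^n;q)_(K-n)], whose second factor is at most [E] *)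
    apply Rle_trans with (PK / E)%R; [apply Rmin_l|].
    assert (HPn : (PK <= Cmod (qpoch a q n) * E)%R).
    { unfold PK. replace K with (n + (K - n))%nat by lia. rewrite qpoch_add, Cmod_mult.
      apply Rmult_le_compat_l; [apply Cmod_ge_0|]. apply Cmod_qpoch_le; [exact Hq|].
      rewrite Hshift. pose proof (pow_le_one (Cmod q) n ltac:(lra)).
      pose proof (pow_le (Cmod q) n Hq0). nra. }
    apply (Rmult_le_reg_r E); [lra|]. unfold Rdiv. rewrite Rmult_assoc, Rinv_l; lra.
  - apply Rle_trans with (PK / 2)%R; [apply Rmin_r|].
    replace n with (K + (n - K))%nat by lia. rewrite qpoch_add, Cmod_mult. fold PK.
    pose proof (Cmod_qpoch_ge_half (a * q ^ K) q (n - K) Hq HK). nra.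
Qed.

Lemma ex_qpoch_inf a q : (Cmod q < 1)%R -> exists P, is_qpoch_inf a q P.
Proof.
  intros Hq. set (E := exp (Cmod a / (1 - Cmod q))).
  assert (Hstep : forall k, (Cmod (qpoch a q (S k) - qpoch a q k) <= E * Cmod a * Cmod q ^ k)%R).
  { intros k. rewrite qpoch_S.
    replace (qpoch a q k * (1 - a * q ^ k) - qpoch a q k) with (- (qpoch a q k * (a * q ^ k)))
      by ring.
    rewrite Cmod_opp, !Cmod_mult, Cmod_pow, <- Rmult_assoc.
    apply Rmult_le_compat_r; [apply pow_le, Cmod_ge_0|].
    apply Rmult_le_compat_r; [apply Cmod_ge_0|]. apply Cmod_qpoch_le; lra. }
  destruct (ex_seriesC_geom _ _ (Cmod q) ltac:(split; [apply Cmod_ge_0|exact Hq]) Hstep) as [D HD].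
  exists (1 + D). apply is_series_csum in HD. unfold is_qpoch_inf.
  apply (limC_ext (fun n => 1 + csum n (fun k => qpoch a q (S k) - qpoch a q k))).
  - intros n. rewrite csum_telescope. unfold qpoch at 2. simpl. ring.
  - apply limC_plus; [apply limC_const|exact HD].
Qed.

Lemma is_qpoch_inf_0_l q : is_qpoch_inf 0 q 1.
Proof.
  unfold is_qpoch_inf. apply (limC_ext (fun _ => RtoC 1)); [|apply limC_const].
  intros n. now rewrite qpoch_0_l.
Qed.

Definition qpoch_inf (a q : C) : C := LimC (qpoch a q).

Lemma qpoch_inf_correct a q : (Cmod q < 1)%R -> is_qpoch_inf a q (qpoch_inf a q).
Proof. intros Hq. destruct (ex_qpoch_inf a q Hq) as [P HP]. exact (LimC_correct _ _ HP). Qed.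

Lemma qpoch_inf_neq0 a q : (Cmod q < 1)%R -> (forall k, a * q ^ k <> 1) -> qpoch_inf a q <> 0.
Proof.
  intros Hq Ha E. destruct (qpoch_lower_bound a q Hq Ha) as [d [Hd Hdn]].
  pose proof (limC_Cmod_ge _ _ _ (qpoch_inf_correct a q Hq) Hdn). rewrite E, Cmod_0 in *. lra.
Qed.

Lemma qpoch_inf_neq0_of_Cmod_lt_1 a q : (Cmod q < 1)%R -> (Cmod a < 1)%R -> qpoch_inf a q <> 0.
Proof. intros Hq Ha. apply qpoch_inf_neq0; [exact Hq|]. intros k. apply Cmult_pow_neq1; lra. Qed.

Lemma qpoch_inf_split a q n : (Cmod q < 1)%R -> qpoch_inf a q = qpoch a q n * qpoch_inf (a * q ^ n) q.
Proof.
  intros Hq. apply (limC_unique (fun m => qpoch a q (n + m)%nat)).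
  - apply limC_shift_iff, qpoch_inf_correct, Hq.
  - apply (limC_ext (fun m => qpoch a q n * qpoch (a * q ^ n) q m)).
    + intros m. now rewrite qpoch_add.
    + apply limC_scal, qpoch_inf_correct, Hq.
Qed.

Lemma qpoch_inf_succ_l a q : (Cmod q < 1)%R -> qpoch_inf a q = (1 - a) * qpoch_inf (a * q) q.
Proof.
  intros Hq. rewrite (qpoch_inf_split a q 1 Hq). unfold qpoch. simpl. f_equal; [ring|]. f_equal. ring.
Qed.

Lemma qpoch_inf_0_l q : (Cmod q < 1)%R -> qpoch_inf 0 q = 1.
Proof.
  intros Hq. apply (limC_unique (qpoch 0 q)); [apply qpoch_inf_correct, Hq|apply is_qpoch_inf_0_l].
Qed.

(** * Growth of Cauchy and Rogers-Szegő polynomials *)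

Lemma Cmod_cauchyP_le q x y rho Y k :
  (Cmod q < 1)%R -> (0 < rho)%R -> (Cmod x <= rho)%R -> (Cmod y <= Y)%R ->
  (Cmod (cauchyP q x y k) <= exp (Y / (rho * (1 - Cmod q))) * rho ^ k)%R.
Proof.
  intros Hq Hrho Hx Hy. rewrite Rmult_comm. apply Cmod_cprod_le_exp; auto.
  - eapply Rle_trans; [apply Cmod_ge_0|exact Hy].
  - split; [apply Cmod_ge_0|exact Hq].
  - intros j. eapply Rle_trans; [apply Cmod_triangle|]. rewrite Cmod_opp, Cmod_mult, Cmod_pow.
    pose proof (pow_le (Cmod q) j (Cmod_ge_0 q)). nra.
Qed.

Lemma qpoch_qq_neq0 q n : (Cmod q < 1)%R -> qpoch q q n <> 0.
Proof. intros Hq. apply qpoch_neq0. intros k. apply Cmult_pow_neq1; lra. Qed.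

Lemma qpoch_qq_bounds q :
  (Cmod q < 1)%R -> exists kappa, (0 < kappa)%R /\
    forall n, (kappa <= Cmod (qpoch q q n) <= exp (Cmod q / (1 - Cmod q)))%R.
Proof.
  intros Hq. destruct (qpoch_lower_bound q q Hq) as [kappa [Hk Hkn]].
  - intros k. apply Cmult_pow_neq1; lra.
  - exists kappa. split; [exact Hk|]. intros n. split; [apply Hkn|]. apply Cmod_qpoch_le; lra.
Qed.

Lemma Cmod_inv_qpoch_qq_le q :
  (Cmod q < 1)%R -> exists kappa, (0 < kappa)%R /\ forall n, (Cmod (/ qpoch q q n) <= / kappa)%R.
Proof.
  intros Hq. destruct (qpoch_qq_bounds q Hq) as [kappa [Hk Hkn]]. exists kappa. split; [exact Hk|].
  intros n. rewrite Cmod_inv by now apply qpoch_qq_neq0. apply Rinv_le_contravar; [exact Hk|apply Hkn].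
Qed.

Lemma ex_mult_lt_1_above a s :
  (0 <= a)%R -> (0 <= s)%R -> (a * s < 1)%R -> exists rho, (a < rho)%R /\ (rho * s < 1)%R.
Proof.
  intros Ha Hs H. exists (a + (1 - a * s) / (2 * (s + 1)))%R. split.
  - assert (0 < (1 - a * s) / (2 * (s + 1)))%R by (apply Rdiv_lt_0_compat; lra). lra.
  - assert (X : ((1 - a * s) / (2 * (s + 1)) * s <= (1 - a * s) / 2)%R).
    { apply (Rmult_le_reg_r (2 * (s + 1))); [lra|].
      replace ((1 - a * s) / (2 * (s + 1)) * s * (2 * (s + 1)))%R with ((1 - a * s) * s)%R
        by (field; lra).
      replace ((1 - a * s) / 2 * (2 * (s + 1)))%R with ((1 - a * s) * (s + 1))%R by field. nra. }
    rewrite Rmult_plus_distr_r. lra.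
Qed.

Lemma Cmod_qbinom_le q kappa Q n k :
  (0 < kappa)%R -> (forall m, kappa <= Cmod (qpoch q q m) <= Q)%R ->
  (Cmod (qbinom q n k) <= Q / (kappa * kappa))%R.
Proof.
  intros Hk HQ. destruct (HQ n) as [_ Hn]. destruct (HQ k) as [Hk1 _].
  destruct (HQ (n - k)%nat) as [Hk2 _].
  assert (Hprod : (kappa * kappa <= Cmod (qpoch q q k * qpoch q q (n - k)))%R)
    by (rewrite Cmod_mult; apply Rmult_le_compat; lra).
  unfold qbinom. rewrite Cmod_div by (apply Cmod_gt_0; nra).
  unfold Rdiv. apply Rmult_le_compat; [apply Cmod_ge_0|apply Rlt_le, Rinv_0_lt_compat; nra|exact Hn|].
  apply Rinv_le_contravar; nra.
Qed.

Lemma Cmod_hRS_le q x y rho :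
  (Cmod q < 1)%R -> (Cmod x < rho)%R -> (1 <= rho)%R ->
  exists B, (0 <= B)%R /\ forall n, (Cmod (hRS q x y n) <= B * rho ^ n)%R.
Proof.
  intros Hq Hx Hrho. destruct (qpoch_qq_bounds q Hq) as [kappa [Hk HkQ]].
  set (Q := exp (Cmod q / (1 - Cmod q))). set (r0 := ((Cmod x + rho) / 2)%R).
  assert (Hr0 : (0 < r0 < rho)%R /\ (Cmod x <= r0)%R) by (pose proof (Cmod_ge_0 x); unfold r0; lra).
  set (E := exp (Cmod y / (r0 * (1 - Cmod q)))).
  set (s := (r0 / rho)%R).
  assert (Hs : (0 <= s < 1)%R).
  { unfold s. split; [apply Rdiv_le_0_compat; lra|].
    apply (Rmult_lt_reg_r rho); [lra|]. unfold Rdiv. rewrite Rmult_assoc, Rinv_l; lra. }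
  assert (HQ0 : (0 <= Q / (kappa * kappa))%R)
    by (apply Rdiv_le_0_compat; [apply Rlt_le, exp_pos|nra]).
  exists (Q / (kappa * kappa) * E / (1 - s))%R. split.
  { apply Rdiv_le_0_compat; [apply Rmult_le_pos; [exact HQ0|apply Rlt_le, exp_pos]|lra]. }
  intros n. unfold hRS. eapply Rle_trans; [apply Cmod_csum_le|].
  apply Rle_trans with (rsum (S n) (fun k => Q / (kappa * kappa) * E * rho ^ n * s ^ k))%R.
  - apply rsum_le. intros k Hk'. rewrite Cmod_mult, !Rmult_assoc.
    apply Rmult_le_compat; [apply Cmod_ge_0|apply Cmod_ge_0|now apply Cmod_qbinom_le|].
    eapply Rle_trans; [apply (Cmod_cauchyP_le q x y r0 (Cmod y)); lra|].
    apply Rmult_le_compat_l; [apply Rlt_le, exp_pos|].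
    replace (r0 ^ k)%R with (rho ^ k * s ^ k)%R
      by (unfold s; rewrite <- Rpow_mult_distr; f_equal; field; lra).
    apply Rmult_le_compat_r; [apply pow_le; lra|]. apply Rle_pow; [lra|lia].
  - rewrite rsum_scal. unfold Rdiv at 2.
    replace (Q / (kappa * kappa) * E * / (1 - s) * rho ^ n)%R
      with (Q / (kappa * kappa) * E * rho ^ n * / (1 - s))%R by ring.
    apply Rmult_le_compat_l; [|now apply rsum_geom_le].
    apply Rmult_le_pos; [apply Rmult_le_pos; [exact HQ0|apply Rlt_le, exp_pos]|apply pow_le; lra].
Qed.

(** * The q-binomial theorem *)

Definition qbin_term (q x y z : C) (k : nat) : C := cauchyP q x y k / qpoch q q k * z ^ k.

Lemma qbin_term_0 q x y z : qbin_term q x y z O = 1.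
Proof. unfold qbin_term, cauchyP, qpoch. simpl. field. Qed.

Lemma qbin_term_scale q x y c z k : qbin_term q x y (c * z) k = c ^ k * qbin_term q x y z k.
Proof. unfold qbin_term. rewrite Cpow_mult_l. ring. Qed.

Lemma qbin_term_succ q x y z k :
  (Cmod q < 1)%R ->
  (1 - q ^ S k) * qbin_term q x y z (S k) = z * (x - q ^ k * y) * qbin_term q x y z k.
Proof.
  intros Hq. unfold qbin_term, cauchyP. simpl. fold (cauchyP q x y k).
  pose proof (qpoch_qq_neq0 q (S k) Hq) as HS. rewrite qpoch_S in *.
  field. split; intros E; apply HS; rewrite E; ring.
Qed.

Lemma qbin_term_bound q x z Y :
  (Cmod q < 1)%R -> (Cmod (x * z) < 1)%R ->
  exists A r, (0 <= A)%R /\ (0 <= r < 1)%R /\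
    forall y k, (Cmod y <= Y)%R -> (Cmod (qbin_term q x y z k) <= A * r ^ k)%R.
Proof.
  intros Hq Hxz. rewrite Cmod_mult in Hxz.
  destruct (ex_mult_lt_1_above _ _ (Cmod_ge_0 x) (Cmod_ge_0 z) Hxz) as [rho [Hrho Hrhoz]].
  pose proof (Cmod_ge_0 x). pose proof (Cmod_ge_0 z).
  destruct (Cmod_inv_qpoch_qq_le q Hq) as [kappa [Hk Hkn]].
  set (E := exp (Y / (rho * (1 - Cmod q)))).
  exists (E / kappa)%R, (rho * Cmod z)%R. split; [|split].
  - apply Rdiv_le_0_compat; [apply Rlt_le, exp_pos|exact Hk].
  - split; [apply Rmult_le_pos; lra|exact Hrhoz].
  - intros y k Hy. unfold qbin_term, Cdiv. rewrite !Cmod_mult, Cmod_pow, Rpow_mult_distr.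
    assert (HP := Cmod_cauchyP_le q x y rho Y k Hq ltac:(lra) ltac:(lra) Hy). fold E in HP.
    replace (E / kappa * (rho ^ k * Cmod z ^ k))%R with (E * rho ^ k * / kappa * Cmod z ^ k)%R
      by (field; lra).
    apply Rmult_le_compat_r; [apply pow_le; lra|].
    apply Rmult_le_compat; auto using Cmod_ge_0.
Qed.

Definition qbin_sum (q x y z : C) : C := SeriesC (qbin_term q x y z).

Lemma qbin_sum_correct q x y z :
  (Cmod q < 1)%R -> (Cmod (x * z) < 1)%R -> is_series (qbin_term q x y z) (qbin_sum q x y z).
Proof.
  intros Hq Hxz. apply SeriesC_correct.
  destruct (qbin_term_bound q x z (Cmod y) Hq Hxz) as [A [r [HA [Hr Hb]]]].
  apply (ex_seriesC_geom _ A r Hr). intros k. now apply Hb.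
Qed.

Lemma Cmod_mult_lt_1_scale x c z :
  (Cmod c <= 1)%R -> (Cmod (x * z) < 1)%R -> (Cmod (x * (c * z)) < 1)%R.
Proof.
  intros Hc Hxz. rewrite Cmod_mult in *. rewrite Cmod_mult.
  replace (Cmod x * (Cmod c * Cmod z))%R with (Cmod x * Cmod z * Cmod c)%R by ring.
  pose proof (Rmult_le_pos _ _ (Cmod_ge_0 x) (Cmod_ge_0 z)). pose proof (Cmod_ge_0 c). nra.
Qed.

(* Shifting the index of [F(z) - F(q z)] and applying [qbin_term_succ] gives
   [z (x F(z) - y F(q z))]. *)
Lemma qbin_sum_q_shift q x y z :
  (Cmod q < 1)%R -> (Cmod (x * z) < 1)%R ->
  (1 - x * z) * qbin_sum q x y z = (1 - y * z) * qbin_sum q x y (q * z).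
Proof.
  intros Hq Hxz. set (F := qbin_sum q x y).
  pose proof (qbin_sum_correct q x y z Hq Hxz) as Hz.
  pose proof (qbin_sum_correct q x y (q * z) Hq (Cmod_mult_lt_1_scale x q z ltac:(lra) Hxz)) as Hqz.
  pose proof (is_seriesC_tail _ _ (is_seriesC_minus _ _ _ _ Hz Hqz)) as Hdiff.
  pose proof (is_seriesC_scal z _ _ (is_seriesC_minus _ _ _ _ (is_seriesC_scal x _ _ Hz)
                                        (is_seriesC_scal y _ _ Hqz))) as Hrec.
  assert (E : forall k, qbin_term q x y z (S k) - qbin_term q x y (q * z) (S k) =
                      z * (x * qbin_term q x y z k - y * qbin_term q x y (q * z) k)).
  { intros k. rewrite !qbin_term_scale.
    transitivity ((1 - q ^ S k) * qbin_term q x y z (S k)); [ring|].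
    rewrite qbin_term_succ by exact Hq. ring. }
  pose proof (is_seriesC_unique _ _ _ (is_seriesC_ext _ _ _ E Hdiff) Hrec) as U.
  cbv beta in U. rewrite !qbin_term_0 in U. fold F in U |- *.
  apply Ceq_minus.
  transitivity (F z - F (q * z) - (1 - 1) - z * (x * F z - y * F (q * z))); [ring|].
  rewrite U. ring.
Qed.

Lemma qbin_sum_iter q x y z n :
  (Cmod q < 1)%R -> (Cmod (x * z) < 1)%R ->
  qpoch (x * z) q n * qbin_sum q x y z = qpoch (y * z) q n * qbin_sum q x y (q ^ n * z).
Proof.
  intros Hq Hxz. induction n as [|n IH].
  - unfold qpoch. simpl. now rewrite !Cmult_1_l.
  - rewrite !qpoch_S.
    replace (qpoch (x * z) q n * (1 - x * z * q ^ n) * qbin_sum q x y z)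
      with ((1 - x * (q ^ n * z)) * (qpoch (x * z) q n * qbin_sum q x y z)) by ring.
    rewrite IH.
    replace ((1 - x * (q ^ n * z)) * (qpoch (y * z) q n * qbin_sum q x y (q ^ n * z)))
      with (qpoch (y * z) q n * ((1 - x * (q ^ n * z)) * qbin_sum q x y (q ^ n * z))) by ring.
    rewrite qbin_sum_q_shift.
    + replace (q * (q ^ n * z)) with (q ^ S n * z) by (simpl; ring). ring.
    + exact Hq.
    + apply Cmod_mult_lt_1_scale; [|exact Hxz]. rewrite Cmod_pow. apply pow_le_one.
      split; [apply Cmod_ge_0|lra].
Qed.

Lemma qbin_sum_lim_1 q x y z :
  (Cmod q < 1)%R -> (Cmod (x * z) < 1)%R -> (fun n => qbin_sum q x y (q ^ n * z)) --> RtoC 1.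
Proof.
  intros Hq Hxz. pose proof (Cmod_ge_0 q) as Hq0.
  destruct (qbin_term_bound q x z (Cmod y) Hq Hxz) as [A [r [HA [Hr Hb]]]].
  apply (limC_of_dist_le _ _ (fun n => A * r / (1 - r) * Cmod q ^ n)%R).
  - intros n. assert (Hqn : (0 <= Cmod q ^ n <= 1)%R) by (split; [apply pow_le|apply pow_le_one]; lra).
    assert (Hs : (0 <= r * Cmod q ^ n < 1)%R) by (split; nra).
    replace (RtoC 1) with (csum 1 (qbin_term q x y (q ^ n * z))) by (simpl; rewrite qbin_term_0; ring).
    rewrite Cmod_sub_comm. eapply Rle_trans.
    + apply (is_seriesC_geom_tail_le _ _ A (r * Cmod q ^ n)); [exact Hs|exact HA| |].
      * intros k. rewrite qbin_term_scale, Cmod_mult, !Cmod_pow, Rpow_mult_distr.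
        replace (A * (r ^ k * (Cmod q ^ n) ^ k))%R with ((Cmod q ^ n) ^ k * (A * r ^ k))%R by ring.
        apply Rmult_le_compat_l; [apply pow_le; lra|]. apply Hb. lra.
      * apply qbin_sum_correct; [exact Hq|]. apply Cmod_mult_lt_1_scale; [|exact Hxz].
        rewrite Cmod_pow. lra.
    + rewrite pow_1.
      replace (A * r / (1 - r) * Cmod q ^ n)%R with (A * (r * Cmod q ^ n) / (1 - r))%R by (field; lra).
      unfold Rdiv. apply Rmult_le_compat_l; [apply Rmult_le_pos; lra|]. apply Rinv_le_contravar; nra.
  - replace 0%R with (A * r / (1 - r) * 0)%R by ring.
    apply (is_lim_seq_scal_l _ _ 0%R), is_lim_seq_geom. rewrite Rabs_pos_eq; lra.
Qed.

Theorem q_binomial q x y z :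
  (Cmod q < 1)%R -> (Cmod (x * z) < 1)%R ->
  is_series (qbin_term q x y z) (qpoch_inf (y * z) q / qpoch_inf (x * z) q).
Proof.
  intros Hq Hxz.
  assert (Hnz : qpoch_inf (x * z) q <> 0) by (apply qpoch_inf_neq0_of_Cmod_lt_1; lra).
  assert (E : qpoch_inf (x * z) q * qbin_sum q x y z = qpoch_inf (y * z) q * 1).
  { apply (limC_unique (fun n => qpoch (x * z) q n * qbin_sum q x y z)).
    - apply limC_mult; [apply qpoch_inf_correct, Hq|apply limC_const].
    - apply (limC_ext (fun n => qpoch (y * z) q n * qbin_sum q x y (q ^ n * z))).
      + intros n. symmetry. now apply qbin_sum_iter.
      + apply limC_mult; [apply qpoch_inf_correct, Hq|now apply qbin_sum_lim_1]. }
  replace (qpoch_inf (y * z) q / qpoch_inf (x * z) q) with (qbin_sum q x y z).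
  - now apply qbin_sum_correct.
  - rewrite Cmult_1_r in E. rewrite <- E. field. exact Hnz.
Qed.

(** * Generating functions of the Rogers-Szegő polynomials *)

Lemma qbinom_div_qpoch q n k :
  (Cmod q < 1)%R -> qbinom q n k / qpoch q q n = / (qpoch q q k * qpoch q q (n - k)).
Proof.
  intros Hq. unfold qbinom.
  pose proof (qpoch_qq_neq0 q n Hq). pose proof (qpoch_qq_neq0 q k Hq).
  pose proof (qpoch_qq_neq0 q (n - k) Hq). field. auto.
Qed.

Lemma csum_qbinom_div q (F : nat -> nat -> C) n :
  (Cmod q < 1)%R ->
  csum (S n) (fun k => qbinom q n k * F k (n - k)%nat) / qpoch q q n =
  csum (S n) (fun k => F k (n - k)%nat / (qpoch q q k * qpoch q q (n - k))).
Proof.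
  intros Hq. unfold Cdiv at 1. rewrite Cmult_comm, <- csum_scal. apply csum_ext. intros k Hk.
  transitivity (qbinom q n k / qpoch q q n * F k (n - k)%nat); [unfold Cdiv; ring|].
  rewrite qbinom_div_qpoch by exact Hq. unfold Cdiv. ring.
Qed.

Lemma cauchyP_1_0 q j : cauchyP q 1 0 j = 1.
Proof. induction j as [|j IH]; [reflexivity|]. unfold cauchyP in *. simpl. rewrite IH. ring. Qed.

Lemma hRS_term_diag q x y t n :
  (Cmod q < 1)%R ->
  hRS q x y n * t ^ n / qpoch q q n =
  csum (S n) (fun i => qbin_term q x y t i * qbin_term q 1 0 t (n - i)).
Proof.
  intros Hq.
  transitivity (csum (S n) (fun k => qbinom q n k * (cauchyP q x y k * t ^ k * t ^ (n - k)%nat))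
                / qpoch q q n).
  { unfold hRS, Cdiv. f_equal. rewrite Cmult_comm, <- csum_scal. apply csum_ext. intros k Hk.
    replace (t ^ n) with (t ^ k * t ^ (n - k)%nat) by (rewrite <- Cpow_add_r; f_equal; lia). ring. }
  rewrite (csum_qbinom_div q (fun k j => cauchyP q x y k * t ^ k * t ^ j) n Hq).
  apply csum_ext. intros k _.
  pose proof (qpoch_qq_neq0 q k Hq). pose proof (qpoch_qq_neq0 q (n - k) Hq).
  unfold qbin_term. rewrite cauchyP_1_0. field. auto.
Qed.

Theorem hRS_gf q x y t :
  (Cmod q < 1)%R -> (Cmod t < 1)%R -> (Cmod (x * t) < 1)%R ->
  is_series (fun n => hRS q x y n * t ^ n / qpoch q q n)
    (qpoch_inf (y * t) q / (qpoch_inf t q * qpoch_inf (x * t) q)).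
Proof.
  intros Hq Ht Hxt.
  assert (Ht' : (Cmod (1 * t) < 1)%R) by now rewrite Cmult_1_l.
  destruct (qbin_term_bound q x t (Cmod y) Hq Hxt) as [A1 [r1 [HA1 [Hr1 Hb1]]]].
  destruct (qbin_term_bound q 1 t (Cmod 0) Hq Ht') as [A2 [r2 [HA2 [Hr2 Hb2]]]].
  set (c := qpoch_inf (0 * t) q / qpoch_inf (1 * t) q).
  assert (Hbound : forall i j,
            (Cmod (qbin_term q x y t i * qbin_term q 1 0 t j) <= A1 * A2 * r1 ^ i * r2 ^ j)%R).
  { intros i j. rewrite Cmod_mult.
    replace (A1 * A2 * r1 ^ i * r2 ^ j)%R with ((A1 * r1 ^ i) * (A2 * r2 ^ j))%R by ring.
    apply Rmult_le_compat; auto using Cmod_ge_0, Rle_refl. }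
  assert (Hrow : forall i, is_series (fun j => qbin_term q x y t i * qbin_term q 1 0 t j)
                                     (qbin_term q x y t i * c)).
  { intros i. apply is_seriesC_scal, q_binomial; assumption. }
  destruct (is_series_diagonals _ _ (A1 * A2) r1 r2 ltac:(nra) Hr1 Hr2 Hbound Hrow) as [l [Hrows Hdiag]].
  assert (Hl : l = qpoch_inf (y * t) q / qpoch_inf (x * t) q * c).
  { apply (is_seriesC_unique _ _ _ Hrows).
    apply (is_seriesC_ext (fun i => c * qbin_term q x y t i) _ _ (fun i => Cmult_comm _ _)).
    rewrite Cmult_comm. apply is_seriesC_scal, q_binomial; assumption. }
  assert (Hval : qpoch_inf (y * t) q / (qpoch_inf t q * qpoch_inf (x * t) q)
                 = qpoch_inf (y * t) q / qpoch_inf (x * t) q * c).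
  { unfold c. rewrite Cmult_0_l, Cmult_1_l, qpoch_inf_0_l by exact Hq.
    assert (qpoch_inf t q <> 0) by (apply qpoch_inf_neq0_of_Cmod_lt_1; lra).
    assert (qpoch_inf (x * t) q <> 0) by (apply qpoch_inf_neq0_of_Cmod_lt_1; lra).
    field. auto. }
  rewrite Hval, <- Hl.
  exact (is_seriesC_ext _ _ _ (fun n => eq_sym (hRS_term_diag q x y t n Hq)) Hdiag).
Qed.

(* [(q;q)_b qbinom_transform q x e b = sum_n [b n] x^(b-n) e_n]. *)
Definition qbinom_transform (q x : C) (e : nat -> C) (b : nat) : C :=
  csum (S b) (fun n => x ^ (b - n) * e n / (qpoch q q n * qpoch q q (b - n))).

(* The q-Pascal rule [1 - q^(b+1) = q^n (1 - q^(b+1-n)) + (1 - q^n)], summed against [e]. *)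
Lemma qbinom_transform_succ q x e b :
  (Cmod q < 1)%R ->
  (1 - q ^ S b) * qbinom_transform q x e (S b) =
  qbinom_transform q x (fun n => x * q ^ n * e n + e (S n)) b.
Proof.
  intros Hq. unfold qbinom_transform.
  set (W := fun n m => / (qpoch q q n * qpoch q q m)).
  assert (Hnz : forall n, 1 - q * q ^ n <> 0).
  { intros n E. apply (qpoch_qq_neq0 q (S n) Hq). rewrite qpoch_S. simpl. rewrite E. ring. }
  set (F1 := fun n => x ^ (S b - n) * e n * q ^ n * (1 - q ^ (S b - n)) * W n (S b - n)%nat).
  set (F2 := fun n => x ^ (S b - n) * e n * (1 - q ^ n) * W n (S b - n)%nat).
  rewrite <- csum_scal, (csum_ext (S (S b)) _ (fun n => F1 n + F2 n)).
  2:{ intros n Hn. unfold F1, F2, W.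
      replace (q ^ S b) with (q ^ n * q ^ (S b - n)%nat)
        by (rewrite <- Cpow_add_r; f_equal; lia).
      unfold Cdiv. ring. }
  rewrite csum_plus. change (csum (S (S b)) F1) with (csum (S b) F1 + F1 (S b)).
  rewrite (csum_Sl (S b) F2).
  replace (F1 (S b)) with (RtoC 0) by (unfold F1; rewrite Nat.sub_diag; simpl; ring).
  replace (F2 O) with (RtoC 0) by (unfold F2; simpl; ring).
  rewrite Cplus_0_r, Cplus_0_l, <- csum_plus. apply csum_ext. intros n Hn.
  unfold F1, F2, W. replace (S b - S n)%nat with (b - n)%nat by lia.
  replace (S b - n)%nat with (S (b - n)) by lia. rewrite !qpoch_S.
  pose proof (qpoch_qq_neq0 q n Hq). pose proof (qpoch_qq_neq0 q (b - n) Hq).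
  pose proof (Hnz n). pose proof (Hnz (b - n)%nat).
  simpl. field. repeat split; auto.
Qed.

Definition poch_ratio (q x y t : C) (n : nat) : C :=
  qpoch y q n * qpoch (x * t) q n / qpoch (y * t) q n.

Definition hRS_gf_value (q x y t : C) : C := qpoch_inf (y * t) q / (qpoch_inf t q * qpoch_inf (x * t) q).

(* [t <> 0] because the induction on the shift divides by [t]. *)
Definition gf_admissible (q x y t : C) : Prop :=
  t <> 0 /\ (Cmod t < 1)%R /\ (Cmod (x * t) < 1)%R /\ forall k, y * t * q ^ k <> 1.

Lemma gf_admissible_factors_neq0 q x y t :
  gf_admissible q x y t -> 1 - t <> 0 /\ 1 - x * t <> 0 /\ 1 - y * t <> 0.
Proof.
  intros (_ & Ht & Hxt & Hyt). specialize (Hyt O). rewrite Cmult_1_r in Hyt.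
  split; [|split]; apply Cminus_1_neq0; [apply Cmod_lt_1_neq1..|]; assumption.
Qed.

Lemma gf_admissible_q_shift q x y t :
  (0 < Cmod q < 1)%R -> gf_admissible q x y t -> gf_admissible q x y (q * t).
Proof.
  intros Hq (Ht0 & Ht & Hxt & Hyt). split; [|split; [|split]].
  - apply Cmult_neq_0; [|exact Ht0]. intros E. rewrite E, Cmod_0 in Hq. lra.
  - rewrite Cmod_mult. pose proof (Cmod_ge_0 t). nra.
  - apply Cmod_mult_lt_1_scale; [lra|exact Hxt].
  - intros k. replace (y * (q * t) * q ^ k) with (y * t * q ^ S k) by (simpl; ring). apply Hyt.
Qed.

Lemma qpoch_q_shift a q n : qpoch (a * q) q n * (1 - a) = qpoch a q n * (1 - a * q ^ n).
Proof. rewrite <- qpoch_S, qpoch_succ_l. ring. Qed.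

Lemma poch_ratio_q_shift q x y t n :
  gf_admissible q x y t ->
  poch_ratio q x y t n - (1 - t) * (1 - x * t) / (1 - y * t) * poch_ratio q x y (q * t) n =
  t * (x * q ^ n * poch_ratio q x y t n + poch_ratio q x y t (S n)).
Proof.
  intros Ht. destruct (gf_admissible_factors_neq0 _ _ _ _ Ht) as (_ & Nxt & Nyt).
  destruct Ht as (_ & _ & _ & Hyt).
  assert (Nytn : 1 - y * t * q ^ n <> 0) by now apply Cminus_1_neq0.
  assert (Z : qpoch (y * t) q n <> 0) by now apply qpoch_neq0.
  assert (Hshift : forall a, 1 - a <> 0 ->
                   qpoch (a * q) q n = qpoch a q n * (1 - a * q ^ n) / (1 - a)).
  { intros a Ha. rewrite <- qpoch_q_shift. field. exact Ha. }
  unfold poch_ratio. replace (x * (q * t)) with (x * t * q) by ring.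
  replace (y * (q * t)) with (y * t * q) by ring.
  rewrite !Hshift by assumption. rewrite !qpoch_S. field. repeat split; auto.
Qed.

Lemma qbinom_transform_poch_ratio_q_shift q x y t b :
  (Cmod q < 1)%R -> gf_admissible q x y t ->
  qbinom_transform q x (poch_ratio q x y t) b
  - (1 - t) * (1 - x * t) / (1 - y * t) * qbinom_transform q x (poch_ratio q x y (q * t)) b =
  t * ((1 - q ^ S b) * qbinom_transform q x (poch_ratio q x y t) (S b)).
Proof.
  intros Hq Ht. rewrite qbinom_transform_succ by exact Hq. unfold qbinom_transform.
  rewrite <- !csum_scal, <- csum_minus. apply csum_ext. intros n _.
  set (rho := (1 - t) * (1 - x * t) / (1 - y * t)).
  transitivity (x ^ (b - n) / (qpoch q q n * qpoch q q (b - n))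
                * (poch_ratio q x y t n - rho * poch_ratio q x y (q * t) n)); [unfold Cdiv; ring|].
  unfold rho. rewrite poch_ratio_q_shift by exact Ht. unfold Cdiv. ring.
Qed.

Lemma hRS_gf_value_q_shift q x y t :
  (Cmod q < 1)%R -> gf_admissible q x y t ->
  hRS_gf_value q x y (q * t) = hRS_gf_value q x y t * ((1 - t) * (1 - x * t) / (1 - y * t)).
Proof.
  intros Hq Hadm. destruct (gf_admissible_factors_neq0 _ _ _ _ Hadm) as (Nt & Nxt & Nyt).
  destruct Hadm as (_ & Ht & Hxt & _).
  assert (Hsmall : forall a, (Cmod a < 1)%R -> qpoch_inf (a * q) q <> 0).
  { intros a Ha. apply qpoch_inf_neq0_of_Cmod_lt_1; [exact Hq|].
    rewrite Cmod_mult. pose proof (Cmod_ge_0 a). pose proof (Cmod_ge_0 q). nra. }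
  pose proof (Hsmall t Ht). pose proof (Hsmall (x * t) Hxt).
  unfold hRS_gf_value. rewrite (qpoch_inf_succ_l (y * t)), (qpoch_inf_succ_l t), (qpoch_inf_succ_l (x * t)) by exact Hq.
  replace (y * (q * t)) with (y * t * q) by ring. replace (x * (q * t)) with (x * t * q) by ring.
  replace (q * t) with (t * q) by ring. field. repeat split; auto.
Qed.

Lemma hRS_shift_term_q_diff q x y t b M :
  (Cmod q < 1)%R ->
  hRS q x y (S M + b) * t ^ S M / qpoch q q (S M)
  - hRS q x y (S M + b) * (q * t) ^ S M / qpoch q q (S M) =
  t * (hRS q x y (M + S b) * t ^ M / qpoch q q M).
Proof.
  intros Hq. replace (S M + b)%nat with (M + S b)%nat by lia.
  pose proof (qpoch_qq_neq0 q (S M) Hq) as HS. pose proof (qpoch_qq_neq0 q M Hq).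
  rewrite Cpow_mult_l. rewrite qpoch_S in *. simpl. field.
  split; intros E; apply HS; rewrite E; ring.
Qed.

(* Induction on [b]: the q-difference [F_b(t) - F_b(q t)] of the series, divided by [t], is
   the series [F_(b+1)(t)]. *)
Theorem hRS_shift_gf q x y b t :
  (0 < Cmod q < 1)%R -> gf_admissible q x y t ->
  is_series (fun M => hRS q x y (M + b) * t ^ M / qpoch q q M)
    (hRS_gf_value q x y t * (qpoch q q b * qbinom_transform q x (poch_ratio q x y t) b)).
Proof.
  intros Hq. revert t. induction b as [|b IH]; intros t Ht.
  - replace (qpoch q q 0 * qbinom_transform q x (poch_ratio q x y t) 0) with (RtoC 1)
      by (unfold qbinom_transform, poch_ratio, qpoch; simpl; field).
    rewrite Cmult_1_r. destruct Ht as (_ & Ht & Hxt & _).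
    apply (is_seriesC_ext (fun M => hRS q x y M * t ^ M / qpoch q q M)).
    + intros M. now rewrite Nat.add_0_r.
    + apply hRS_gf; lra || assumption.
  - pose proof (gf_admissible_q_shift q x y t Hq Ht) as Hqt.
    pose proof (is_seriesC_tail _ _ (is_seriesC_minus _ _ _ _ (IH t Ht) (IH (q * t) Hqt))) as D.
    apply (is_seriesC_ext _ _ _ (fun M => hRS_shift_term_q_diff q x y t b M ltac:(lra))) in D.
    apply (is_seriesC_scal (/ t)) in D.
    pose proof (qbinom_transform_poch_ratio_q_shift q x y t b ltac:(lra) Ht) as Hrec.
    rewrite hRS_gf_value_q_shift in D by (lra || exact Ht). destruct Ht as [Ht0 _].
    set (A := qbinom_transform q x (poch_ratio q x y t)) in *.
    set (G := hRS_gf_value q x y t) in *.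
    match type of D with is_series _ ?v =>
      assert (Hval : @eq C v (G * (qpoch q q (S b) * A (S b)))) end.
    { transitivity (/ t * (G * qpoch q q b * (A b - (1 - t) * (1 - x * t) / (1 - y * t)
                                               * qbinom_transform q x (poch_ratio q x y (q * t)) b)));
        [simpl; unfold Cdiv; ring|].
      rewrite Hrec, qpoch_S. simpl. field. exact Ht0. }
    rewrite Hval in D. refine (is_seriesC_ext _ _ _ _ D). intros M.
    change (/ t * (t * (hRS q x y (M + S b) * t ^ M / qpoch q q M))
            = hRS q x y (M + S b) * t ^ M / qpoch q q M).
    field. split; [apply qpoch_qq_neq0; lra|exact Ht0].
Qed.

(** * The bilinear generating function *)

Lemma cauchyP_add q u v n m : cauchyP q u v (n + m) = cauchyP q u v n * cauchyP q u (v * q ^ n) m.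
Proof.
  unfold cauchyP. rewrite cprod_add. f_equal. apply cprod_ext. intros k _.
  rewrite Cpow_add_r. ring.
Qed.

Lemma cauchyP_eq_qpoch (q u v : C) n : u <> 0 -> cauchyP q u v n = qpoch (v / u) q n * u ^ n.
Proof.
  intros Hu. induction n as [|n IH]; [unfold cauchyP, qpoch; simpl; ring|].
  unfold cauchyP in *. simpl. rewrite IH, qpoch_S. field. exact Hu.
Qed.

Lemma gf_admissible_yt_neq1 q x y t : gf_admissible q x y t -> forall k, y * t * q ^ k <> 1.
Proof. now intros (_ & _ & _ & H). Qed.

Lemma poch_ratio_bound q x y t :
  (Cmod q < 1)%R -> gf_admissible q x y t ->
  exists E, (0 <= E)%R /\ forall n, (Cmod (poch_ratio q x y t n) <= E)%R.
Proof.
  intros Hq Ht.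
  destruct (qpoch_lower_bound (y * t) q Hq (gf_admissible_yt_neq1 _ _ _ _ Ht)) as [d [Hd Hdn]].
  set (E1 := exp (Cmod y / (1 - Cmod q))). set (E2 := exp (Cmod (x * t) / (1 - Cmod q))).
  exists (E1 * E2 / d)%R. split.
  { apply Rdiv_le_0_compat; [apply Rmult_le_pos; apply Rlt_le, exp_pos|exact Hd]. }
  intros n. unfold poch_ratio.
  rewrite Cmod_div, Cmod_mult by now apply qpoch_neq0, gf_admissible_yt_neq1 with x.
  unfold Rdiv. apply Rmult_le_compat.
  - apply Rmult_le_pos; apply Cmod_ge_0.
  - apply Rlt_le, Rinv_0_lt_compat. specialize (Hdn n). lra.
  - apply Rmult_le_compat; auto using Cmod_ge_0; apply Cmod_qpoch_le; lra.
  - apply Rinv_le_contravar; [exact Hd|apply Hdn].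
Qed.

Lemma phi32_row q x y u v t n :
  (Cmod q < 1)%R -> gf_admissible q x y t -> (Cmod (u * x * t) < 1)%R -> u <> 0 ->
  (forall k, v * x * t * q ^ k <> 1) ->
  qbin_term q u v t n * poch_ratio q x y t n
    * (qpoch_inf (v * q ^ n * (x * t)) q / qpoch_inf (u * (x * t)) q) =
  qpoch_inf (v * x * t) q / qpoch_inf (u * x * t) q
    * phi32_term y (x * t) (v / u) (y * t) (v * x * t) q (u * t) n.
Proof.
  intros Hq Ht Huxt Hu Hvxt.
  assert (Nuxt : qpoch_inf (u * x * t) q <> 0)
    by (apply qpoch_inf_neq0_of_Cmod_lt_1; lra).
  pose proof (qpoch_qq_neq0 q n Hq).
  pose proof (qpoch_neq0 _ _ n (gf_admissible_yt_neq1 _ _ _ _ Ht)).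
  pose proof (qpoch_neq0 _ _ n Hvxt).
  unfold qbin_term, poch_ratio, phi32_term.
  rewrite (qpoch_inf_split (v * x * t) q n Hq), cauchyP_eq_qpoch by exact Hu.
  replace (v * q ^ n * (x * t)) with (v * x * t * q ^ n) by ring.
  replace (u * (x * t)) with (u * x * t) by ring.
  rewrite Cpow_mult_l. field. repeat split; auto.
Qed.

Lemma phi32_diagonal q x y u v t b :
  (Cmod q < 1)%R ->
  csum (S b) (fun n => qbin_term q u v t n * poch_ratio q x y t n
                       * qbin_term q u (v * q ^ n) (x * t) (b - n)) =
  cauchyP q u v b * t ^ b * qbinom_transform q x (poch_ratio q x y t) b.
Proof.
  intros Hq. unfold qbinom_transform. rewrite <- csum_scal. apply csum_ext. intros n Hn.
  pose proof (qpoch_qq_neq0 q n Hq). pose proof (qpoch_qq_neq0 q (b - n) Hq).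
  replace (cauchyP q u v b) with (cauchyP q u v n * cauchyP q u (v * q ^ n) (b - n))
    by (rewrite <- cauchyP_add; f_equal; lia).
  replace (t ^ b) with (t ^ n * t ^ (b - n)%nat) by (rewrite <- Cpow_add_r; f_equal; lia).
  unfold qbin_term. rewrite Cpow_mult_l. field. auto.
Qed.

Lemma Cmod_pow_shift_le (v q : C) n : (Cmod q <= 1)%R -> (Cmod (v * q ^ n) <= Cmod v)%R.
Proof.
  intros Hq. rewrite Cmod_mult, Cmod_pow.
  pose proof (pow_le_one (Cmod q) n ltac:(split; [apply Cmod_ge_0|exact Hq])).
  pose proof (pow_le (Cmod q) n (Cmod_ge_0 q)). pose proof (Cmod_ge_0 v). nra.
Qed.

Theorem cauchyP_transform_series_phi32 q x y u v t :
  (Cmod q < 1)%R -> gf_admissible q x y t -> (Cmod (u * t) < 1)%R -> (Cmod (u * x * t) < 1)%R ->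
  u <> 0 -> (forall k, v * x * t * q ^ k <> 1) ->
  exists S : C, is_series (phi32_term y (x * t) (v / u) (y * t) (v * x * t) q (u * t)) S /\
    is_series (fun b => cauchyP q u v b * t ^ b * qbinom_transform q x (poch_ratio q x y t) b)
      (qpoch_inf (v * x * t) q / qpoch_inf (u * x * t) q * S).
Proof.
  intros Hq Ht Hut Huxt Hu Hvxt.
  set (c := qpoch_inf (v * x * t) q / qpoch_inf (u * x * t) q).
  set (phi := phi32_term y (x * t) (v / u) (y * t) (v * x * t) q (u * t)).
  assert (Hc : c <> 0).
  { assert (Nv : qpoch_inf (v * x * t) q <> 0) by (apply qpoch_inf_neq0; auto).
    assert (qpoch_inf (u * x * t) q <> 0) by (apply qpoch_inf_neq0_of_Cmod_lt_1; lra).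
    intros E. apply Nv.
    replace (qpoch_inf (v * x * t) q) with (c * qpoch_inf (u * x * t) q) by (unfold c; field; auto).
    rewrite E. ring. }
  assert (Hu_xt : (Cmod (u * (x * t)) < 1)%R) by now rewrite Cmult_assoc.
  destruct (qbin_term_bound q u t (Cmod v) Hq Hut) as [A1 [r1 [HA1 [Hr1 Hb1]]]].
  destruct (qbin_term_bound q u (x * t) (Cmod v) Hq Hu_xt) as [A2 [r2 [HA2 [Hr2 Hb2]]]].
  destruct (poch_ratio_bound q x y t Hq Ht) as [E [HE HEn]].
  set (a := fun n m =>
         qbin_term q u v t n * poch_ratio q x y t n * qbin_term q u (v * q ^ n) (x * t) m).
  assert (Hbound : forall n m, (Cmod (a n m) <= A1 * E * A2 * r1 ^ n * r2 ^ m)%R).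
  { intros n m. unfold a. rewrite !Cmod_mult.
    replace (A1 * E * A2 * r1 ^ n * r2 ^ m)%R with (A1 * r1 ^ n * E * (A2 * r2 ^ m))%R by ring.
    apply Rmult_le_compat; [apply Rmult_le_pos; apply Cmod_ge_0|apply Cmod_ge_0| |].
    - apply Rmult_le_compat; auto using Cmod_ge_0, Rle_refl.
    - apply Hb2, Cmod_pow_shift_le. lra. }
  assert (Hrow : forall n, is_series (a n) (c * phi n)).
  { intros n. unfold c, phi. rewrite <- phi32_row by assumption.
    apply is_seriesC_scal, q_binomial; assumption. }
  destruct (is_series_diagonals a (fun n => c * phi n) (A1 * E * A2) r1 r2) as [l [Hrows Hdiag]];
    auto.
  { apply Rmult_le_pos; [apply Rmult_le_pos|]; assumption. }
  exists (l / c). split.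
  - apply (is_seriesC_ext (fun n => / c * (c * phi n))); [intros n; field; exact Hc|].
    replace (l / c) with (/ c * l) by (unfold Cdiv; ring). now apply is_seriesC_scal.
  - replace (c * (l / c)) with l by (field; exact Hc).
    refine (is_seriesC_ext _ _ _ _ Hdiag). intros b. apply phi32_diagonal, Hq.
Qed.

Lemma Rmax_1_mult_lt_1 a b s :
  (0 <= a)%R -> (0 <= b)%R -> (0 <= s < 1)%R -> (a * s < 1)%R -> (b * s < 1)%R -> (a * b * s < 1)%R ->
  (Rmax 1 a * Rmax 1 b * s < 1)%R.
Proof. intros. unfold Rmax. destruct (Rle_dec 1 a); destruct (Rle_dec 1 b); lra. Qed.

Lemma hRS_product_diagonal q x y u v t N :
  (Cmod q < 1)%R ->
  csum (S N) (fun b => qbin_term q u v t b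
                       * (hRS q x y (N - b + b) * t ^ (N - b) / qpoch q q (N - b))) =
  hRS q x y N * hRS q u v N * t ^ N / qpoch q q N.
Proof.
  intros Hq.
  transitivity (csum (S N) (fun b => qbinom q N b
                                     * (cauchyP q u v b * t ^ b * (hRS q x y (N - b + b) * t ^ (N - b))))
                / qpoch q q N).
  - rewrite (csum_qbinom_div q (fun b j => cauchyP q u v b * t ^ b * (hRS q x y (j + b) * t ^ j))
                             N Hq).
    apply csum_ext. intros b _. unfold qbin_term. 
    pose proof (qpoch_qq_neq0 q b Hq). pose proof (qpoch_qq_neq0 q (N - b) Hq). field. auto.
  - unfold Cdiv. f_equal.
    change (hRS q u v N) with (csum (S N) (fun b => qbinom q N b * cauchyP q u v b)).
    transitivity (hRS q x y N * t ^ N * csum (S N) (fun b => qbinom q N b * cauchyP q u v b)); [|ring].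
    rewrite <- csum_scal. apply csum_ext. intros b Hb.
    replace (N - b + b)%nat with N by lia.
    replace (t ^ N) with (t ^ b * t ^ (N - b)%nat) by (rewrite <- Cpow_add_r; f_equal; lia). ring.
Qed.

Lemma ex_radius_for_product (x u t : C) :
  (Cmod t < 1)%R -> (Cmod (x * t) < 1)%R -> (Cmod (u * t) < 1)%R -> (Cmod (u * x * t) < 1)%R ->
  exists rho, (1 <= rho)%R /\ (Cmod x < rho)%R /\ (rho * Cmod t < 1)%R /\
              (Cmod (u * (rho * t)) < 1)%R.
Proof.
  intros Ht Hxt Hut Huxt.
  pose proof (Cmod_ge_0 x). pose proof (Cmod_ge_0 u). pose proof (Cmod_ge_0 t).
  pose proof (Rmax_l 1 (Cmod x)). pose proof (Rmax_r 1 (Cmod x)).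
  pose proof (Rmax_l 1 (Cmod u)). pose proof (Rmax_r 1 (Cmod u)).
  assert (Hm : (Rmax 1 (Cmod x) * (Rmax 1 (Cmod u) * Cmod t) < 1)%R).
  { rewrite <- Rmult_assoc. rewrite !Cmod_mult in *. apply Rmax_1_mult_lt_1; lra. }
  destruct (ex_mult_lt_1_above (Rmax 1 (Cmod x)) (Rmax 1 (Cmod u) * Cmod t)
              ltac:(lra) ltac:(apply Rmult_le_pos; lra) Hm) as [rho [Hrho Hrhot]].
  assert (Hu : (Cmod u * (rho * Cmod t) <= Rmax 1 (Cmod u) * (rho * Cmod t))%R)
    by (apply Rmult_le_compat_r; [apply Rmult_le_pos|]; lra).
  assert (Ht1 : (1 * (rho * Cmod t) <= Rmax 1 (Cmod u) * (rho * Cmod t))%R)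
    by (apply Rmult_le_compat_r; [apply Rmult_le_pos|]; lra).
  exists rho. repeat split; try lra.
  rewrite !Cmod_mult, Cmod_R, Rabs_pos_eq by lra. lra.
Qed.

Lemma hRS_product_term_bound q x y u v t :
  (Cmod q < 1)%R -> (Cmod t < 1)%R -> (Cmod (x * t) < 1)%R -> (Cmod (u * t) < 1)%R ->
  (Cmod (u * x * t) < 1)%R ->
  exists B r s, (0 <= B)%R /\ (0 <= r < 1)%R /\ (0 <= s < 1)%R /\ forall b M,
    (Cmod (qbin_term q u v t b * (hRS q x y (M + b) * t ^ M / qpoch q q M)) <= B * r ^ b * s ^ M)%R.
Proof.
  intros Hq Ht Hxt Hut Huxt. pose proof (Cmod_ge_0 t).
  destruct (ex_radius_for_product x u t Ht Hxt Hut Huxt) as (rho & Hrho1 & Hrhox & Hrhot & Hurt).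
  destruct (Cmod_hRS_le q x y rho ltac:(lra) Hrhox Hrho1) as [B1 [HB1 Hh]].
  destruct (qbin_term_bound q u (rho * t) (Cmod v) ltac:(lra) Hurt) as [A [r [HA [Hr Hb]]]].
  destruct (Cmod_inv_qpoch_qq_le q ltac:(lra)) as [kappa [Hk Hkn]].
  exists (A * B1 / kappa)%R, r, (rho * Cmod t)%R.
  split; [apply Rdiv_le_0_compat; [apply Rmult_le_pos|]; assumption|].
  split; [exact Hr|]. split; [split; [apply Rmult_le_pos|]; lra|].
  (* the growth [rho^(M+b)] of [h_(M+b)] is split between the two factors *)
  intros b M. unfold Cdiv. rewrite !Cmod_mult, Cmod_pow.
  specialize (Hb v b (Rle_refl _)).
  rewrite qbin_term_scale, Cmod_mult, Cmod_pow, Cmod_R, Rabs_pos_eq in Hb by lra.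
  specialize (Hh (M + b)%nat). rewrite pow_add in Hh. specialize (Hkn M).
  pose proof (Cmod_ge_0 (qbin_term q u v t b)). pose proof (Cmod_ge_0 (hRS q x y (M + b))).
  pose proof (Cmod_ge_0 (/ qpoch q q M)). pose proof (pow_le (Cmod t) M ltac:(lra)).
  pose proof (pow_le rho b ltac:(lra)). pose proof (pow_le rho M ltac:(lra)).
  assert (Hcol : (Cmod (hRS q x y (M + b)) * Cmod t ^ M * Cmod (/ qpoch q q M)
                  <= rho ^ b * (B1 / kappa * (rho * Cmod t) ^ M))%R).
  { rewrite Rpow_mult_distr. unfold Rdiv.
    replace (rho ^ b * (B1 * / kappa * (rho ^ M * Cmod t ^ M)))%R
      with (B1 * (rho ^ M * rho ^ b) * Cmod t ^ M * / kappa)%R by ring.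
    apply Rmult_le_compat; [apply Rmult_le_pos; assumption|assumption| |assumption].
    apply Rmult_le_compat_r; assumption. }
  replace (A * B1 / kappa * r ^ b * (rho * Cmod t) ^ M)%R
    with (A * r ^ b * (B1 / kappa * (rho * Cmod t) ^ M))%R by (field; lra).
  apply Rle_trans with (Cmod (qbin_term q u v t b) * (rho ^ b * (B1 / kappa * (rho * Cmod t) ^ M)))%R.
  - apply Rmult_le_compat_l; assumption.
  - rewrite <- Rmult_assoc, (Rmult_comm (Cmod _)). apply Rmult_le_compat_r; [|exact Hb].
    apply Rmult_le_pos; [apply Rdiv_le_0_compat; lra|apply pow_le; nra].
Qed.

Theorem hRS_product_series q x y u v t Sd :
  (0 < Cmod q < 1)%R -> gf_admissible q x y t -> (Cmod (u * t) < 1)%R -> (Cmod (u * x * t) < 1)%R ->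
  is_series (fun b => cauchyP q u v b * t ^ b * qbinom_transform q x (poch_ratio q x y t) b) Sd ->
  is_series (fun n => hRS q x y n * hRS q u v n * t ^ n / qpoch q q n) (hRS_gf_value q x y t * Sd).
Proof.
  intros Hq Ht Hut Huxt HSd. pose proof Ht as (_ & Ht1 & Hxt & _).
  destruct (hRS_product_term_bound q x y u v t ltac:(lra) Ht1 Hxt Hut Huxt)
    as (B & r & s & HB & Hr & Hs & Hbound).
  assert (Hrow : forall b,
            is_series (fun M => qbin_term q u v t b * (hRS q x y (M + b) * t ^ M / qpoch q q M))
                   (qbin_term q u v t b * (hRS_gf_value q x y t *
                      (qpoch q q b * qbinom_transform q x (poch_ratio q x y t) b)))).
  { intros b. apply is_seriesC_scal, hRS_shift_gf; assumption. }
  destruct (is_series_diagonals _ _ B r s HB Hr Hs Hbound Hrow) as [l [Hrows Hdiag]].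
  assert (Hl : l = hRS_gf_value q x y t * Sd).
  { apply (is_seriesC_unique _ _ _ Hrows).
    refine (is_seriesC_ext _ _ _ _ (is_seriesC_scal (hRS_gf_value q x y t) _ _ HSd)). intros b.
    pose proof (qpoch_qq_neq0 q b ltac:(lra)). unfold qbin_term. field. auto. }
  rewrite <- Hl. refine (is_seriesC_ext _ _ _ _ Hdiag). intros N. apply hRS_product_diagonal. lra.
Qed.

Lemma is_seriesC_head (a : nat -> C) : (forall n, a (S n) = 0) -> is_series a (a O).
Proof.
  intros H. apply is_series_csum, (limC_shift_iff _ 1).
  apply (limC_ext (fun _ => a O)); [|apply limC_const].
  intros n. change (csum (1 + n) a) with (csum (S n) a).
  rewrite csum_Sl, (csum_ext n _ (fun _ => RtoC 0)) by (intros; apply H).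
  assert (Z : forall m, csum m (fun _ => RtoC 0) = 0).
  { intros m. induction m as [|m IH]; simpl; [|rewrite IH]; ring. }
  rewrite Z. ring.
Qed.

Lemma phi32_series_at_0 y w q : is_series (phi32_term y 0 w 0 0 q 0) (RtoC 1).
Proof.
  replace (RtoC 1) with (phi32_term y 0 w 0 0 q 0 0) by (unfold phi32_term, qpoch; simpl; field).
  apply is_seriesC_head. intros n. unfold phi32_term. simpl. ring.
Qed.

Lemma hRS_product_series_at_0 q x y u v :
  is_series (fun n => hRS q x y n * hRS q u v n * 0 ^ n / qpoch q q n) (RtoC 1).
Proof.
  replace (RtoC 1) with (hRS q x y 0 * hRS q u v 0 * 0 ^ 0 / qpoch q q 0)
    by (unfold hRS, qbinom, cauchyP, qpoch; simpl; field).
  apply is_seriesC_head. intros n. simpl. unfold Cdiv. ring.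
Qed.

Theorem theorem2p1 (q x y u v t : C) :
  (0 < Cmod q)%R -> (Cmod q < 1)%R ->
  (Cmod t < 1)%R -> (Cmod (x * t) < 1)%R -> (Cmod (u * t) < 1)%R ->
  (Cmod (u * x * t) < 1)%R ->
  u <> RtoC 0 ->
  (forall k : nat, y * t * Cpow q k <> RtoC 1) ->
  (forall k : nat, v * x * t * Cpow q k <> RtoC 1) ->
  exists (Pyt Pvxt Pt Pxt Puxt S : C),
    is_qpoch_inf (y * t) q Pyt /\
    is_qpoch_inf (v * x * t) q Pvxt /\
    is_qpoch_inf t q Pt /\
    is_qpoch_inf (x * t) q Pxt /\
    is_qpoch_inf (u * x * t) q Puxt /\
    is_series (phi32_term y (x * t) (v / u) (y * t) (v * x * t) q (u * t)) S /\
    is_series (fun n => hRS q x y n * hRS q u v n * Cpow t n / qpoch q q n)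
      (Pyt * Pvxt / (Pt * Pxt * Puxt) * S).
Proof.
  intros Hq0 Hq Ht Hxt Hut Huxt Hu Hyt Hvxt.
  destruct (Ceq_dec t 0) as [->|Ht0].
  - exists 1, 1, 1, 1, 1, 1. rewrite !Cmult_0_r.
    replace (1 * 1 / (1 * 1 * 1) * 1) with (RtoC 1) by field.
    repeat split; auto using is_qpoch_inf_0_l, phi32_series_at_0, hRS_product_series_at_0.
  - assert (Ht' : gf_admissible q x y t) by (repeat split; assumption).
    destruct (cauchyP_transform_series_phi32 q x y u v t Hq Ht' Hut Huxt Hu Hvxt) as [S [HS HSd]].
    exists (qpoch_inf (y * t) q), (qpoch_inf (v * x * t) q), (qpoch_inf t q), (qpoch_inf (x * t) q),
      (qpoch_inf (u * x * t) q), S.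
    repeat split; try (apply qpoch_inf_correct, Hq); [exact HS|].
    replace (qpoch_inf (y * t) q * qpoch_inf (v * x * t) q
             / (qpoch_inf t q * qpoch_inf (x * t) q * qpoch_inf (u * x * t) q) * S)
      with (hRS_gf_value q x y t * (qpoch_inf (v * x * t) q / qpoch_inf (u * x * t) q * S)).
    + apply hRS_product_series; [lra|assumption..].
    + assert (qpoch_inf t q <> 0) by (apply qpoch_inf_neq0_of_Cmod_lt_1; lra).
      assert (qpoch_inf (x * t) q <> 0) by (apply qpoch_inf_neq0_of_Cmod_lt_1; lra).
      assert (qpoch_inf (u * x * t) q <> 0) by (apply qpoch_inf_neq0_of_Cmod_lt_1; lra).
      unfold hRS_gf_value. field. repeat split; assumption.
Qed.
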